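(* Let $H:[0,1]\times\mathbb R\to\mathbb R$ be continuous, coercive in $p$, and quasiconvex in $p$ with $\mathrm{Int}\{p: H(s,p)\le b\}=\{p:H(s,p)<b\}$ for all $s,b$. Let $a_H=\max_s\min_pH(s,p)$ and let $c_H$ be the minimum of those $a\in\mathbb R$ for which $H(s,u')=a$ admits a viscosity subsolution $u$ in $(0,1)$, continuous on $[0,1]$, with $u(0)=u(1)$ (a periodic subsolution). Assume that either $c_H>a_H$, or $s\mapsto\min_pH(s,p)$ is constant on $[0,1]$. With $\sigma^\pm_{c_H}(s)$ the largest/smallest $p$ with $H(s,p)=c_H$, one has $$\min\Big\{-\int_0^1\sigma^-_{c_H}(t)\,dt,\ \int_0^1\sigma^+_{c_H}(t)\,dt\Big\}=0 .$$
   Context: Coercive: $H(s,p)\to+\infty$ as $|p|\to\infty$ uniformly in $s$; quasiconvex: convex sublevel sets in $p$. The minimum defining $c_H$ exists and $c_H\ge a_H$. *)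

From Stdlib Require Import Reals Lra.
Open Scope R_scope.

Definition I01 (s : R) : Prop := 0 <= s <= 1.

Definition JointCont (H : R -> R -> R) : Prop :=
  forall s p, I01 s -> forall eps, 0 < eps -> exists delta, 0 < delta /\
    forall s' p', I01 s' -> Rabs (s' - s) < delta -> Rabs (p' - p) < delta ->
      Rabs (H s' p' - H s p) < eps.

Definition Coercive (H : R -> R -> R) : Prop :=
  forall M, exists K, forall s p, I01 s -> K < Rabs p -> M < H s p.

Definition QuasiConvex (H : R -> R -> R) : Prop :=
  forall s b p q t, I01 s -> H s p <= b -> H s q <= b -> 0 <= t <= 1 ->
    H s (t * p + (1 - t) * q) <= b.

Definition interior (A : R -> Prop) (p : R) : Prop :=
  exists eps, 0 < eps /\ forall q, Rabs (q - p) < eps -> A q.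

Definition InteriorCond (H : R -> R -> R) : Prop :=
  forall s b p, I01 s -> (interior (fun q => H s q <= b) p <-> H s p < b).

Definition IsMinOver (A : R -> Prop) (f : R -> R) (m : R) : Prop :=
  (exists x, A x /\ f x = m) /\ (forall x, A x -> m <= f x).

Definition IsMaxOver (A : R -> Prop) (f : R -> R) (m : R) : Prop :=
  (exists x, A x /\ f x = m) /\ (forall x, A x -> f x <= m).

Definition ContOn01 (u : R -> R) : Prop :=
  forall s, I01 s -> forall eps, 0 < eps -> exists delta, 0 < delta /\
    forall t, I01 t -> Rabs (t - s) < delta -> Rabs (u t - u s) < eps.

Definition C1 (phi : R -> R) : Prop :=
  exists dphi : R -> R, (forall x, derivable_pt_lim phi x (dphi x)) /\ continuity dphi.

Definition ViscSub (H : R -> R -> R) (a : R) (u : R -> R) : Prop :=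
  forall (s : R) (phi : R -> R) (dphi : R -> R),
    0 < s < 1 ->
    (forall x, derivable_pt_lim phi x (dphi x)) -> continuity dphi ->
    (exists delta, 0 < delta /\ forall t, 0 < t < 1 -> Rabs (t - s) < delta ->
        u t - phi t <= u s - phi s) ->
    H s (dphi s) <= a.

Definition AdmitsPeriodicSub (H : R -> R -> R) (a : R) : Prop :=
  exists u : R -> R, ContOn01 u /\ u 0 = u 1 /\ ViscSub H a u.

From Pilot Require Import Defs.
From Stdlib Require Import Reals Lra.
From Coquelicot Require Import Coquelicot.
Open Scope R_scope.

(* The sublevel set {p | H s p <= cH} is the band [sigm s, sigp s]; its endpoints are
   continuous in s, H s > cH outside the band and H s < cH strictly inside it.
   Comparing a periodic subsolution u at level cH with the barriers x |-> int_0^x sigp and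
   x |-> int_0^x sigm shows that u minus the first is nonincreasing and u minus the second
   nondecreasing, so int sigp >= 0 >= int sigm. If both were nonzero, the hypothesis on cH
   makes the band nondegenerate (otherwise sigm = sigp and both integrals vanish), and the
   convex combination of sigm and sigp with zero mean lies strictly inside the band: its
   primitive is a periodic C^1 subsolution at a level below cH, contradicting minimality. *)

Lemma continuity_pt_of_eps (f : R -> R) x :
  (forall eps, 0 < eps -> exists d, 0 < d /\
     forall y, Rabs (y - x) < d -> Rabs (f y - f x) < eps) ->
  continuity_pt f x.
Proof.
  intros Hf eps Heps. destruct (Hf eps Heps) as [d [Hd Hy]].
  exists d; split; [lra|]. intros y [_ Hyx]. exact (Hy y Hyx).
Qed.

Lemma continuity_pt_eps (f : R -> R) x : continuity_pt f x ->
  forall eps, 0 < eps -> exists d, 0 < d /\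
    forall y, Rabs (y - x) < d -> Rabs (f y - f x) < eps.
Proof.
  intros Hf eps Heps. destruct (Hf eps Heps) as [d [Hd Hy]].
  exists d; split; [lra|]. intros y Hyx.
  destruct (Req_dec y x) as [->|Hne].
  - rewrite Rminus_diag, Rabs_R0; lra.
  - apply (Hy y). split; [split; [exact I | auto] | exact Hyx].
Qed.

Definition clamp01 (x : R) : R := Rmin 1 (Rmax 0 x).

Definition ext01 (f : R -> R) (x : R) : R := f (clamp01 x).

Lemma clamp01_I01 x : I01 (clamp01 x).
Proof. unfold clamp01, I01, Rmin, Rmax. repeat destruct Rle_dec; lra. Qed.

Lemma clamp01_id x : I01 x -> clamp01 x = x.
Proof. unfold clamp01, I01, Rmin, Rmax. intros. repeat destruct Rle_dec; lra. Qed.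

Lemma Rabs_clamp01_le x y : Rabs (clamp01 x - clamp01 y) <= Rabs (x - y).
Proof.
  unfold clamp01, Rmin, Rmax. repeat destruct Rle_dec;
  unfold Rabs; repeat destruct Rcase_abs; lra.
Qed.

Lemma ext01_id f x : I01 x -> ext01 f x = f x.
Proof. intros Hx. unfold ext01. rewrite clamp01_id; auto. Qed.

Lemma continuity_ext01 f : ContOn01 f -> continuity (ext01 f).
Proof.
  intros Hf x. apply continuity_pt_of_eps. intros eps Heps.
  destruct (Hf (clamp01 x) (clamp01_I01 x) eps Heps) as [d [Hd Hy]].
  exists d; split; [lra|]. intros y Hyx. apply Hy; [apply clamp01_I01|].
  pose proof (Rabs_clamp01_le y x). lra.
Qed.

Lemma ContOn01_of_continuity f : continuity f -> ContOn01 f.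
Proof.
  intros Hf s _ eps Heps. destruct (continuity_pt_eps f s (Hf s) eps Heps) as [d [Hd Hy]].
  exists d; split; auto.
Qed.

Lemma ContOn01_opp f : ContOn01 (fun s => - f s) -> ContOn01 f.
Proof.
  intros Hf s Hs eps Heps. destruct (Hf s Hs eps Heps) as [d [Hd Hy]].
  exists d; split; auto. intros t Ht Hts.
  replace (f t - f s) with (- (- f t - - f s)) by ring. rewrite Rabs_Ropp; auto.
Qed.

Lemma ContOn01_reverse f : ContOn01 f -> ContOn01 (fun x => f (1 - x)).
Proof.
  intros Hf s Hs eps Heps.
  destruct (Hf (1 - s) ltac:(unfold I01 in *; lra) eps Heps) as [d [Hd Hy]].
  exists d; split; auto. intros t Ht Hts. apply Hy; [unfold I01 in *; lra|].
  replace (1 - t - (1 - s)) with (- (t - s)) by ring. rewrite Rabs_Ropp; auto.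
Qed.

Lemma continuity_pt_lt_left f a b : continuity_pt f b -> a < b -> f a < f b ->
  exists b', a < b' < b /\ f a < f b'.
Proof.
  intros Hf Hab Hlt.
  destruct (continuity_pt_eps f b Hf (f b - f a) ltac:(lra)) as [d [Hd Hy]].
  set (b' := b - Rmin (d / 2) ((b - a) / 2)).
  assert (Hh : 0 < Rmin (d / 2) ((b - a) / 2)) by (apply Rmin_pos; lra).
  pose proof (Rmin_l (d / 2) ((b - a) / 2)). pose proof (Rmin_r (d / 2) ((b - a) / 2)).
  exists b'. split; [unfold b'; lra|].
  assert (Hb' : Rabs (f b' - f b) < f b - f a).
  { apply Hy. unfold b'. rewrite Rabs_left; lra. }
  revert Hb'. unfold Rabs. destruct Rcase_abs; lra.
Qed.

Lemma derivable_pt_lim_of_quadratic_remainder f x l C : 0 <= C ->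
  (forall h, Rabs (f (x + h) - f x - h * l) <= C * (h * h)) -> derivable_pt_lim f x l.
Proof.
  intros HC Hb eps Heps.
  assert (Hd : 0 < eps / (C + 1)) by (apply Rdiv_lt_0_compat; lra).
  exists (mkposreal _ Hd). intros h Hh0 Hh. simpl in Hh.
  assert (Hah : 0 < Rabs h) by (apply Rabs_pos_lt; auto).
  replace ((f (x + h) - f x) / h - l) with ((f (x + h) - f x - h * l) / h) by (field; auto).
  unfold Rdiv. rewrite Rabs_mult, Rabs_inv.
  apply (Rmult_lt_reg_r (Rabs h)); auto.
  rewrite Rmult_assoc, Rinv_l, Rmult_1_r by lra.
  specialize (Hb h). replace (h * h) with (Rabs h * Rabs h) in Hb
    by (unfold Rabs; destruct Rcase_abs; ring).
  assert (HCh : C * Rabs h < eps).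
  { apply Rle_lt_trans with ((C + 1) * Rabs h); [nra|].
    apply (Rmult_lt_reg_r (/ (C + 1))); [apply Rinv_0_lt_compat; lra|].
    replace ((C + 1) * Rabs h * / (C + 1)) with (Rabs h) by (field; lra). exact Hh. }
  nra.
Qed.

Definition sq_ramp (b t : R) : R := Rmax 0 (t - b) * Rmax 0 (t - b).

Definition d_sq_ramp (b t : R) : R := 2 * Rmax 0 (t - b).

Lemma derivable_pt_lim_sq_ramp b x : derivable_pt_lim (sq_ramp b) x (d_sq_ramp b x).
Proof.
  apply (derivable_pt_lim_of_quadratic_remainder _ _ _ 2); [lra|]. intros h.
  unfold sq_ramp, d_sq_ramp, Rmax. repeat destruct Rle_dec; unfold Rabs; destruct Rcase_abs; nra.
Qed.

Lemma continuity_d_sq_ramp b : continuity (d_sq_ramp b).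
Proof.
  intro x. apply continuity_pt_of_eps. intros eps Heps. exists (eps / 2). split; [lra|].
  intros y Hy. unfold d_sq_ramp, Rmax. repeat destruct Rle_dec; revert Hy; unfold Rabs;
  repeat destruct Rcase_abs; intros; lra.
Qed.

Lemma derivable_pt_lim_reverse f df x : (forall y, derivable_pt_lim f y (df y)) ->
  derivable_pt_lim (fun y => f (1 - y)) x (- df (1 - x)).
Proof.
  intros Hf. replace (- df (1 - x)) with (df (1 - x) * (0 - 1)) by ring.
  apply (derivable_pt_lim_comp (fun y => 1 - y) f).
  - apply (derivable_pt_lim_minus (fct_cte 1) id);
      [apply derivable_pt_lim_const | apply derivable_pt_lim_id].
  - apply Hf.
Qed.

Lemma continuity_reverse f : continuity f -> continuity (fun y => - f (1 - y)).
Proof.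
  intros Hf. apply (continuity_opp (comp f (fun y => 1 - y))).
  apply continuity_comp; auto.
  apply (continuity_minus (fct_cte 1) id); [apply continuity_const; intros ? ?; auto |
    apply derivable_continuous, derivable_id].
Qed.

Lemma derivable_pt_lim_RInt f : continuity f ->
  forall x, derivable_pt_lim (fun x => RInt f 0 x) x (f x).
Proof.
  intros Hf x. apply is_derive_Reals.
  assert (Hc : forall z, continuous f z) by (intro z; apply continuity_pt_filterlim, Hf).
  apply (is_derive_RInt f (fun x => RInt f 0 x) 0 x); auto.
  apply filter_forall. intro b.
  exact (RInt_correct (V := R_CompleteNormedModule) f 0 b
    (ex_RInt_continuous (V := R_CompleteNormedModule) f 0 b (fun z _ => Hc z))).
Qed.

Lemma RiemannInt_ContOn01 f : ContOn01 f ->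
  exists pr : Riemann_integrable f 0 1, RiemannInt pr = RInt (ext01 f) 0 1.
Proof.
  intros Hf.
  assert (Hc : forall z, continuous (ext01 f) z)
    by (intro z; apply continuity_pt_filterlim, continuity_ext01, Hf).
  assert (pr0 : Riemann_integrable (ext01 f) 0 1).
  { apply ex_RInt_Reals_0.
    exact (ex_RInt_continuous (V := R_CompleteNormedModule) (ext01 f) 0 1 (fun z _ => Hc z)). }
  assert (Heq : forall x, Rmin 0 1 <= x <= Rmax 0 1 -> ext01 f x = f x).
  { intros x Hx. apply ext01_id. rewrite Rmin_left, Rmax_right in Hx by lra. exact Hx. }
  exists (Rcomplements.Riemann_integrable_ext _ _ _ _ Heq pr0).
  rewrite (RInt_Reals _ _ _ pr0). apply RiemannInt_ext. intros x Hx. symmetry; auto.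
Qed.

Lemma quasiconvex_le_max H s x y z : QuasiConvex H -> I01 s -> x <= y <= z ->
  H s y <= Rmax (H s x) (H s z).
Proof.
  intros Hqc Hs [Hxy Hyz].
  destruct (Req_dec x z) as [Exz|Nxz].
  - replace y with x by lra. apply Rmax_l.
  - set (t := (z - y) / (z - x)).
    assert (Ht : 0 <= t <= 1).
    { unfold t. split.
      - apply Rmult_le_pos; [lra | apply Rlt_le, Rinv_0_lt_compat; lra].
      - apply (Rmult_le_reg_r (z - x)); [lra|].
        unfold Rdiv. rewrite Rmult_assoc, Rinv_l; lra. }
    replace y with (t * x + (1 - t) * z) by (unfold t; field; lra).
    apply Hqc; auto; [apply Rmax_l | apply Rmax_r].
Qed.

Lemma JointCont_fixed_p H s p e : JointCont H -> I01 s -> 0 < e ->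
  exists d, 0 < d /\ forall t, I01 t -> Rabs (t - s) < d -> Rabs (H t p - H s p) < e.
Proof.
  intros Hc Hs He. destruct (Hc s p Hs e He) as [d [Hd Hy]].
  exists d; split; auto. intros t Ht Hts. apply Hy; auto.
  rewrite Rminus_diag, Rabs_R0; lra.
Qed.

Lemma JointCont_continuity H s : JointCont H -> I01 s -> continuity (H s).
Proof.
  intros Hc Hs p. apply continuity_pt_of_eps. intros eps Heps.
  destruct (Hc s p Hs eps Heps) as [d [Hd Hy]]. exists d; split; auto.
  intros q Hq. apply Hy; auto. rewrite Rminus_diag, Rabs_R0; lra.
Qed.

Lemma ContOn01_JointCont_comp H th : JointCont H -> continuity th ->
  ContOn01 (fun s => H s (th s)).
Proof.
  intros Hc Hth s Hs eps Heps.
  destruct (Hc s (th s) Hs eps Heps) as [d1 [Hd1 P1]].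
  destruct (continuity_pt_eps th s (Hth s) d1 Hd1) as [d2 [Hd2 P2]].
  exists (Rmin d1 d2); split; [apply Rmin_pos; auto|].
  intros t Ht Hts. pose proof (Rmin_l d1 d2). pose proof (Rmin_r d1 d2).
  apply P1; auto; [lra|]. apply P2. lra.
Qed.

Definition mirror (H : R -> R -> R) (s p : R) : R := H s (- p).

Lemma JointCont_mirror H : JointCont H -> JointCont (mirror H).
Proof.
  intros Hc s p Hs eps Heps. destruct (Hc s (- p) Hs eps Heps) as [d [Hd Hy]].
  exists d; split; auto. intros s' p' Hs' Hss Hpp. apply Hy; auto.
  replace (- p' - - p) with (- (p' - p)) by ring. rewrite Rabs_Ropp; auto.
Qed.

Lemma Coercive_mirror H : Coercive H -> Coercive (mirror H).
Proof.
  intros Hc M. destruct (Hc M) as [K HK]. exists K.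
  intros s p Hs Hp. apply HK; auto. rewrite Rabs_Ropp; auto.
Qed.

Lemma QuasiConvex_mirror H : QuasiConvex H -> QuasiConvex (mirror H).
Proof.
  intros Hqc s b p q t Hs Hp Hq Ht. unfold mirror.
  replace (- (t * p + (1 - t) * q)) with (t * - p + (1 - t) * - q) by ring.
  apply Hqc; auto.
Qed.

(* Qualified: the Reals import shadows [interior] with Rtopology.interior. *)
Lemma interior_opp (A : R -> Prop) p :
  Defs.interior (fun q => A (- q)) p <-> Defs.interior A (- p).
Proof.
  unfold Defs.interior; split; intros [eps [Heps Hq]]; exists eps; split; auto; intros q Hqp.
  - replace q with (- - q) by ring. apply Hq.
    replace (- q - p) with (- (q - - p)) by ring. rewrite Rabs_Ropp; auto.
  - apply Hq. replace (- q - - p) with (- (q - p)) by ring. rewrite Rabs_Ropp; auto.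
Qed.

Lemma InteriorCond_mirror H : InteriorCond H -> InteriorCond (mirror H).
Proof.
  intros Hint s b p Hs. unfold mirror.
  rewrite (interior_opp (fun q => H s q <= b)). apply Hint; auto.
Qed.

Definition MaxLevel (H : R -> R -> R) (c : R) (hi : R -> R) : Prop :=
  forall s, I01 s -> H s (hi s) = c /\ (forall p, H s p = c -> p <= hi s).

Definition MinLevel (H : R -> R -> R) (c : R) (lo : R -> R) : Prop :=
  forall s, I01 s -> H s (lo s) = c /\ (forall p, H s p = c -> lo s <= p).

Lemma MinLevel_mirror H c lo : MinLevel H c lo -> MaxLevel (mirror H) c (fun s => - lo s).
Proof.
  intros Hlo s Hs. unfold mirror. rewrite Ropp_involutive. split; [apply Hlo; auto|].
  intros p Hp. pose proof (proj2 (Hlo s Hs) (- p) Hp). lra.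
Qed.

Lemma MaxLevel_mirror H c hi : MaxLevel H c hi -> MinLevel (mirror H) c (fun s => - hi s).
Proof.
  intros Hhi s Hs. unfold mirror. rewrite Ropp_involutive. split; [apply Hhi; auto|].
  intros p Hp. pose proof (proj2 (Hhi s Hs) (- p) Hp). lra.
Qed.

Section UpperEndpoint.
Variables (H : R -> R -> R) (c : R) (hi : R -> R).
Hypothesis Hcont : JointCont H.
Hypothesis Hcoer : Coercive H.
Hypothesis Hqc : QuasiConvex H.
Hypothesis Hhi : MaxLevel H c hi.

Lemma level_lt_right_of_max s p : I01 s -> hi s < p -> c < H s p.
Proof.
  intros Hs Hp. destruct (Rlt_le_dec c (H s p)) as [|Hle]; auto. exfalso.
  destruct (Hcoer c) as [K HK].
  set (x := Rmax K p + 1).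
  pose proof (Rmax_l K p). pose proof (Rmax_r K p).
  assert (Hpx : p < x) by (unfold x; lra).
  assert (Hx : c < H s x) by (apply HK; auto; unfold x, Rabs; destruct Rcase_abs; lra).
  destruct (Req_dec (H s p) c) as [E|N].
  - pose proof (proj2 (Hhi s Hs) p E). lra.
  - destruct (IVT (fun q => H s q - c) p x) as [z [Hz Ez]]; cbv beta; try lra.
    + apply continuity_minus; [apply JointCont_continuity; auto |
        apply continuity_const; intros ? ?; auto].
    + pose proof (proj2 (Hhi s Hs) z ltac:(lra)). lra.
Qed.

(* Near s, H t (hi s + eta) stays above c while H t (hi s) stays near c, so by
   quasiconvexity hi t cannot reach hi s + eta. *)
Lemma upper_endpoint_usc s eta : I01 s -> 0 < eta ->
  exists d, 0 < d /\ forall t, I01 t -> Rabs (t - s) < d -> hi t < hi s + eta.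
Proof.
  intros Hs Heta. set (q := hi s).
  assert (Hq : H s q = c) by apply Hhi, Hs.
  assert (Hqe : c < H s (q + eta)) by (apply level_lt_right_of_max; auto; unfold q; lra).
  set (e := (H s (q + eta) - c) / 2).
  destruct (JointCont_fixed_p H s (q + eta) e Hcont Hs ltac:(unfold e; lra)) as [d1 [Hd1 P1]].
  destruct (JointCont_fixed_p H s q e Hcont Hs ltac:(unfold e; lra)) as [d2 [Hd2 P2]].
  exists (Rmin d1 d2); split; [apply Rmin_pos; auto|].
  intros t Ht Hts. pose proof (Rmin_l d1 d2). pose proof (Rmin_r d1 d2).
  destruct (Rlt_le_dec (hi t) (q + eta)) as [|Hle]; auto. exfalso.
  specialize (P1 t Ht ltac:(lra)). specialize (P2 t Ht ltac:(lra)).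
  pose proof (quasiconvex_le_max H t q (q + eta) (hi t) Hqc Ht ltac:(lra)) as Hmax.
  rewrite (proj1 (Hhi t Ht)) in Hmax.
  revert P1 P2 Hmax. unfold Rmax, Rabs, e. repeat destruct Rle_dec; repeat destruct Rcase_abs; lra.
Qed.

End UpperEndpoint.

Lemma level_lt_left_of_min H c lo s p : JointCont H -> Coercive H -> MinLevel H c lo ->
  I01 s -> p < lo s -> c < H s p.
Proof.
  intros Hcont Hcoer Hlo Hs Hp. replace p with (- - p) by ring.
  apply (level_lt_right_of_max (mirror H) c (fun s => - lo s));
    [apply JointCont_mirror | apply Coercive_mirror | apply MinLevel_mirror | | lra]; auto.
Qed.

Lemma lower_endpoint_lsc H c lo s eta : JointCont H -> Coercive H -> QuasiConvex H ->
  MinLevel H c lo -> I01 s -> 0 < eta ->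
  exists d, 0 < d /\ forall t, I01 t -> Rabs (t - s) < d -> lo s - eta < lo t.
Proof.
  intros Hcont Hcoer Hqc Hlo Hs Heta.
  destruct (upper_endpoint_usc (mirror H) c (fun s => - lo s) (JointCont_mirror H Hcont)
    (Coercive_mirror H Hcoer) (QuasiConvex_mirror H Hqc) (MinLevel_mirror H c lo Hlo) s eta Hs Heta)
    as [d [Hd P]].
  exists d; split; auto. intros t Ht Hts. specialize (P t Ht Hts). lra.
Qed.

Section LevelBand.
Variables (H : R -> R -> R) (c : R) (hi lo : R -> R).
Hypothesis Hcont : JointCont H.
Hypothesis Hcoer : Coercive H.
Hypothesis Hqc : QuasiConvex H.
Hypothesis Hint : InteriorCond H.
Hypothesis Hhi : MaxLevel H c hi.
Hypothesis Hlo : MinLevel H c lo.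

Lemma lo_le_hi s : I01 s -> lo s <= hi s.
Proof. intros Hs. apply (proj2 (Hlo s Hs)), (proj1 (Hhi s Hs)). Qed.

Lemma level_le_in_band s p : I01 s -> lo s <= p <= hi s -> H s p <= c.
Proof.
  intros Hs Hp. pose proof (quasiconvex_le_max H s (lo s) p (hi s) Hqc Hs Hp) as Hmax.
  rewrite (proj1 (Hhi s Hs)), (proj1 (Hlo s Hs)), Rmax_left in Hmax; lra.
Qed.

Lemma level_lt_in_band s p : I01 s -> lo s < p < hi s -> H s p < c.
Proof.
  intros Hs Hp. apply (proj1 (Hint s c p Hs)).
  exists (Rmin (p - lo s) (hi s - p)). split; [apply Rmin_pos; lra|].
  intros q Hq. apply level_le_in_band; auto.
  pose proof (Rmin_l (p - lo s) (hi s - p)). pose proof (Rmin_r (p - lo s) (hi s - p)).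
  revert Hq. unfold Rabs. destruct Rcase_abs; lra.
Qed.

(* For a nondegenerate band, a point p just below hi s has H s p < c, which persists
   near s and keeps hi t above p; a degenerate band is handled by lower_endpoint_lsc. *)
Lemma upper_endpoint_lsc s eta : I01 s -> 0 < eta ->
  exists d, 0 < d /\ forall t, I01 t -> Rabs (t - s) < d -> hi s - eta < hi t.
Proof.
  intros Hs Heta. destruct (Rlt_le_dec (lo s) (hi s)) as [Hlt|Hge].
  - set (p := Rmax ((lo s + hi s) / 2) (hi s - eta / 2)).
    assert (Hp : lo s < p < hi s /\ hi s - eta < p) by (unfold p, Rmax; destruct Rle_dec; lra).
    assert (Hps : H s p < c) by (apply level_lt_in_band; tauto).
    destruct (JointCont_fixed_p H s p (c - H s p) Hcont Hs ltac:(lra)) as [d [Hd P]].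
    exists d; split; auto. intros t Ht Hts. specialize (P t Ht Hts).
    destruct (Rlt_le_dec (hi t) p) as [Hl|Hl]; [|lra].
    pose proof (level_lt_right_of_max H c hi Hcont Hcoer Hhi t p Ht Hl).
    revert P. unfold Rabs. destruct Rcase_abs; lra.
  - destruct (lower_endpoint_lsc H c lo s eta Hcont Hcoer Hqc Hlo Hs Heta) as [d [Hd P]].
    exists d; split; auto. intros t Ht Hts. specialize (P t Ht Hts).
    pose proof (lo_le_hi s Hs). pose proof (lo_le_hi t Ht). lra.
Qed.

Lemma upper_endpoint_continuous : ContOn01 hi.
Proof.
  intros s Hs eps Heps.
  destruct (upper_endpoint_usc H c hi Hcont Hcoer Hqc Hhi s eps Hs Heps) as [d1 [Hd1 P1]].
  destruct (upper_endpoint_lsc s eps Hs Heps) as [d2 [Hd2 P2]].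
  exists (Rmin d1 d2); split; [apply Rmin_pos; auto|].
  intros t Ht Hts. pose proof (Rmin_l d1 d2). pose proof (Rmin_r d1 d2).
  specialize (P1 t Ht ltac:(lra)). specialize (P2 t Ht ltac:(lra)).
  unfold Rabs. destruct Rcase_abs; lra.
Qed.

Lemma band_open_of_min_lt s m : I01 s -> IsMinOver (fun _ => True) (H s) m -> m < c ->
  lo s < hi s.
Proof.
  intros Hs [[x [_ Hx]] _] Hm.
  destruct (Rlt_or_le (hi s) x) as [Hx'|Hx'].
  { pose proof (level_lt_right_of_max H c hi Hcont Hcoer Hhi s x Hs Hx'). lra. }
  destruct (Rlt_or_le x (lo s)) as [Hx''|Hx''].
  { pose proof (level_lt_left_of_min H c lo s x Hcont Hcoer Hlo Hs Hx''). lra. }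
  destruct (Req_dec (lo s) (hi s)) as [E|N]; [|pose proof (lo_le_hi s Hs); lra].
  replace x with (hi s) in Hx by lra. rewrite (proj1 (Hhi s Hs)) in Hx. lra.
Qed.

Lemma band_point_of_min_ge s m : I01 s -> IsMinOver (fun _ => True) (H s) m -> c <= m ->
  lo s = hi s.
Proof.
  intros Hs [_ Hmin] Hm. pose proof (lo_le_hi s Hs).
  destruct (Req_dec (lo s) (hi s)) as [|N]; auto. exfalso.
  pose proof (level_lt_in_band s ((lo s + hi s) / 2) Hs ltac:(lra)).
  pose proof (Hmin ((lo s + hi s) / 2) I). lra.
Qed.

Lemma band_open_or_point (minH : R -> R) (aH : R) :
  (forall s, I01 s -> IsMinOver (fun _ => True) (H s) (minH s)) ->
  IsMaxOver I01 minH aH ->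
  c > aH \/ (exists k, forall s, I01 s -> minH s = k) ->
  (forall s, I01 s -> lo s < hi s) \/ (forall s, I01 s -> lo s = hi s).
Proof.
  intros HminH [_ HaH] [Hc | [k Hk]].
  - left. intros s Hs. apply (band_open_of_min_lt s (minH s)); auto.
    pose proof (HaH s Hs). lra.
  - destruct (Rlt_or_le k c) as [Hkc|Hkc]; [left | right]; intros s Hs.
    + apply (band_open_of_min_lt s (minH s)); auto. rewrite Hk; auto.
    + apply (band_point_of_min_ge s (minH s)); auto. rewrite Hk; auto.
Qed.

End LevelBand.

Lemma lower_endpoint_continuous H c hi lo : JointCont H -> Coercive H -> QuasiConvex H ->
  InteriorCond H -> MaxLevel H c hi -> MinLevel H c lo -> ContOn01 lo.
Proof.
  intros Hcont Hcoer Hqc Hint Hhi Hlo. apply ContOn01_opp.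
  apply (upper_endpoint_continuous (mirror H) c (fun s => - lo s) (fun s => - hi s)).
  - apply JointCont_mirror; auto.
  - apply Coercive_mirror; auto.
  - apply QuasiConvex_mirror; auto.
  - apply InteriorCond_mirror; auto.
  - apply MinLevel_mirror; auto.
  - apply MaxLevel_mirror; auto.
Qed.

(* The penalty K (t - b)_+^2 makes the endpoint 1 lose against b; the slope eps is small
   enough not to let a win. *)
Lemma penalized_interior_max F a b : continuity F -> 0 <= a < b -> b < 1 -> F a < F b ->
  exists eps K s, 0 < eps /\ 0 <= K /\ a < s < 1 /\
    forall t, a <= t <= 1 ->
      F t - eps * t - K * sq_ramp b t <= F s - eps * s - K * sq_ramp b s.
Proof.
  intros CF Hab Hb1 HFab.
  set (eps := (F b - F a) / 2).
  set (K := (Rabs (F 1 - F b) + 1) / ((1 - b) * (1 - b))).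
  assert (HK : 0 <= K).
  { apply Rmult_le_pos; [pose proof (Rabs_pos (F 1 - F b)); lra|].
    apply Rlt_le, Rinv_0_lt_compat. nra. }
  assert (HK1 : K * ((1 - b) * (1 - b)) = Rabs (F 1 - F b) + 1) by (unfold K; field; nra).
  set (G := fun t => F t - eps * t - K * sq_ramp b t).
  assert (CG : forall x, continuity_pt G x).
  { intro x. apply continuity_pt_minus; [apply continuity_pt_minus; [apply CF|]|].
    - apply (continuity_pt_scal id eps x), derivable_continuous_pt, derivable_id.
    - apply (continuity_pt_scal (sq_ramp b) K x), derivable_continuous_pt.
      exists (d_sq_ramp b x). apply derivable_pt_lim_sq_ramp. }
  destruct (continuity_ab_maj G a 1 ltac:(lra) (fun x _ => CG x)) as [s [Hmax Hs]].
  assert (Ramp_le : forall t, t <= b -> sq_ramp b t = 0)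
    by (intros t Ht; unfold sq_ramp; rewrite Rmax_left by lra; ring).
  assert (Ramp1 : sq_ramp b 1 = (1 - b) * (1 - b))
    by (unfold sq_ramp; rewrite Rmax_right by lra; reflexivity).
  pose proof (Hmax b ltac:(lra)) as Hbmax. unfold G in Hbmax. rewrite Ramp_le in Hbmax by lra.
  exists eps, K, s. split; [unfold eps; lra|]. split; [exact HK|]. split; [|exact Hmax].
  split.
  - destruct (Req_dec s a) as [E|]; [|lra]. rewrite E, Ramp_le in Hbmax by lra.
    unfold eps in Hbmax. nra.
  - destruct (Req_dec s 1) as [E|]; [|lra]. rewrite E, Ramp1, HK1 in Hbmax.
    pose proof (Rle_abs (F 1 - F b)). unfold eps in Hbmax. nra.
Qed.

Lemma ViscSub_interior_max H c u phi dphi a b s : ViscSub H c u ->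
  (forall x, derivable_pt_lim phi x (dphi x)) -> continuity dphi ->
  0 <= a < s -> s < b <= 1 ->
  (forall t, a <= t <= b -> u t - phi t <= u s - phi s) -> H s (dphi s) <= c.
Proof.
  intros Hsub Dphi Cphi Has Hsb Hmax. apply (Hsub s phi dphi); auto; [lra|].
  exists (Rmin (s - a) (b - s)). split; [apply Rmin_pos; lra|].
  intros t _ Hts. apply Hmax.
  pose proof (Rmin_l (s - a) (b - s)). pose proof (Rmin_r (s - a) (b - s)).
  revert Hts. unfold Rabs. destruct Rcase_abs; lra.
Qed.

Section Monotone.
Variables (H : R -> R -> R) (c : R) (u W om : R -> R).
Hypothesis Hu : ContOn01 u.
Hypothesis Hsub : ViscSub H c u.
Hypothesis HW : forall x, derivable_pt_lim W x (om x).
Hypothesis Hom : continuity om.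
Hypothesis Hlevel : forall s p, 0 < s < 1 -> om s < p -> c < H s p.

(* Were F = u - W to increase from a to b, a penalized maximum of F would sit strictly inside
   (0,1), where the test function W + eps t + K (t - b')_+^2 has slope > om. *)
Lemma sub_minus_primitive_nonincreasing a b : 0 <= a <= b -> b <= 1 ->
  u b - W b <= u a - W a.
Proof.
  intros Hab Hb.
  set (F := fun t => ext01 u t - W t).
  assert (HF : forall t, I01 t -> F t = u t - W t)
    by (intros t Ht; unfold F; rewrite ext01_id; auto).
  assert (CF : continuity F).
  { intro x. apply continuity_pt_minus; [apply continuity_ext01; auto|].
    apply derivable_continuous_pt. exists (om x). apply HW. }
  rewrite <- !HF by (unfold I01; lra).
  destruct (Rle_lt_dec (F b) (F a)) as [|Hlt]; auto. exfalso.
  assert (Hab' : a < b) by (destruct (Req_dec a b) as [E|]; [rewrite E in Hlt|]; lra).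
  destruct (continuity_pt_lt_left F a b (CF b) Hab' Hlt) as [b' [Hb' HFb']].
  destruct (penalized_interior_max F a b' CF ltac:(lra) ltac:(lra) HFb')
    as [eps [K [s [Heps [HK [Hs Hmax]]]]]].
  set (phi := fun t => W t + eps * t + K * sq_ramp b' t).
  set (dphi := fun t => om t + eps + K * d_sq_ramp b' t).
  assert (Dphi : forall x, derivable_pt_lim phi x (dphi x)).
  { intro x. unfold phi, dphi.
    apply (derivable_pt_lim_plus (fun t => W t + eps * t) (fun t => K * sq_ramp b' t)).
    - apply (derivable_pt_lim_plus W (fun t => eps * t)); auto.
      pose proof (derivable_pt_lim_scal id eps x 1 (derivable_pt_lim_id x)) as D.
      rewrite Rmult_1_r in D. exact D.
    - apply (derivable_pt_lim_scal (sq_ramp b') K), derivable_pt_lim_sq_ramp. }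
  assert (Cphi : continuity dphi).
  { unfold dphi. apply (continuity_plus (fun t => om t + eps) (fun t => K * d_sq_ramp b' t)).
    - apply (continuity_plus om (fun _ => eps)); auto.
      apply continuity_const. intros ? ?; auto.
    - apply (continuity_scal (d_sq_ramp b') K), continuity_d_sq_ramp. }
  assert (Hle : H s (dphi s) <= c).
  { apply (ViscSub_interior_max H c u phi dphi a 1 s); auto; try lra.
    intros t Ht. pose proof (Hmax t Ht) as Hts. unfold F in Hts.
    rewrite !ext01_id in Hts by (unfold I01; lra). unfold phi. lra. }
  assert (Hslope : om s < dphi s).
  { unfold dphi, d_sq_ramp. pose proof (Rmax_l 0 (s - b')). nra. }
  pose proof (Hlevel s (dphi s) ltac:(lra) Hslope). lra.
Qed.

End Monotone.

Lemma ViscSub_reverse H c u : ViscSub H c u ->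
  ViscSub (fun s p => H (1 - s) (- p)) c (fun x => u (1 - x)).
Proof.
  intros Hsub s phi dphi Hs Dphi Cphi [d [Hd Hmax]].
  assert (Hrev := Hsub (1 - s) (fun y => phi (1 - y)) (fun y => - dphi (1 - y)) ltac:(lra)
    (fun x => derivable_pt_lim_reverse phi dphi x Dphi) (continuity_reverse dphi Cphi)).
  cbv beta in Hrev. replace (1 - (1 - s)) with s in Hrev by ring. apply Hrev.
  exists d; split; auto. intros t Ht Hts.
  pose proof (Hmax (1 - t) ltac:(lra)) as Hm. replace (1 - (1 - t)) with t in Hm by ring.
  apply Hm. replace (1 - t - s) with (- (t - (1 - s))) by ring. rewrite Rabs_Ropp; auto.
Qed.

Lemma sub_minus_primitive_nondecreasing H c u W om : ContOn01 u -> ViscSub H c u ->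
  (forall x, derivable_pt_lim W x (om x)) -> continuity om ->
  (forall s p, 0 < s < 1 -> p < om s -> c < H s p) ->
  forall a b, 0 <= a <= b -> b <= 1 -> u a - W a <= u b - W b.
Proof.
  intros Hu Hsub HW Hom Hlevel a b Hab Hb.
  pose proof (sub_minus_primitive_nonincreasing (fun s p => H (1 - s) (- p)) c
    (fun x => u (1 - x)) (fun x => W (1 - x)) (fun x => - om (1 - x))
    (ContOn01_reverse u Hu) (ViscSub_reverse H c u Hsub)
    (fun x => derivable_pt_lim_reverse W om x HW) (continuity_reverse om Hom)) as Hmono.
  assert (Hlev : forall s p, 0 < s < 1 -> - om (1 - s) < p -> c < H (1 - s) (- p))
    by (intros s p Hs Hp; apply Hlevel; lra).
  specialize (Hmono Hlev (1 - b) (1 - a) ltac:(lra) ltac:(lra)).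
  cbv beta in Hmono. replace (1 - (1 - a)) with a in Hmono by ring. replace (1 - (1 - b)) with b in Hmono by ring.
  exact Hmono.
Qed.

Lemma RInt_ge0_of_upper_barrier H c u om : ContOn01 u -> u 0 = u 1 -> ViscSub H c u ->
  continuity om -> (forall s p, 0 < s < 1 -> om s < p -> c < H s p) -> 0 <= RInt om 0 1.
Proof.
  intros Hu Hper Hsub Hom Hlevel.
  pose proof (sub_minus_primitive_nonincreasing H c u (fun x => RInt om 0 x) om Hu Hsub
    (derivable_pt_lim_RInt om Hom) Hom Hlevel 0 1 ltac:(lra) ltac:(lra)) as Hmono.
  assert (Hom0 : RInt om 0 0 = 0) by (rewrite RInt_point; reflexivity).
  cbv beta in Hmono. lra.
Qed.

Lemma RInt_le0_of_lower_barrier H c u om : ContOn01 u -> u 0 = u 1 -> ViscSub H c u ->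
  continuity om -> (forall s p, 0 < s < 1 -> p < om s -> c < H s p) -> RInt om 0 1 <= 0.
Proof.
  intros Hu Hper Hsub Hom Hlevel.
  pose proof (sub_minus_primitive_nondecreasing H c u (fun x => RInt om 0 x) om Hu Hsub
    (derivable_pt_lim_RInt om Hom) Hom Hlevel 0 1 ltac:(lra) ltac:(lra)) as Hmono.
  assert (Hom0 : RInt om 0 0 = 0) by (rewrite RInt_point; reflexivity).
  cbv beta in Hmono. lra.
Qed.

Lemma ViscSub_of_derivative H a U th : (forall x, derivable_pt_lim U x (th x)) ->
  (forall s, 0 < s < 1 -> H s (th s) <= a) -> ViscSub H a U.
Proof.
  intros DU Hle s phi dphi Hs Dphi _ [d [Hd Hmax]].
  set (r := Rmin d (Rmin s (1 - s))).
  pose proof (Rmin_l d (Rmin s (1 - s))). pose proof (Rmin_r d (Rmin s (1 - s))).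
  pose proof (Rmin_l s (1 - s)). pose proof (Rmin_r s (1 - s)).
  assert (Hr : 0 < r) by (apply Rmin_pos; [lra | apply Rmin_pos; lra]).
  pose (pr := exist (fun l => derivable_pt_lim (fun t => U t - phi t) s l) (th s - dphi s)
    (derivable_pt_lim_minus U phi s _ _ (DU s) (Dphi s))).
  assert (Hcrit : derive_pt (fun t => U t - phi t) s pr = 0).
  { apply (deriv_maximum _ (s - r) (s + r) s pr); try lra.
    intros x Hx1 Hx2. apply Hmax; unfold r in *; [lra|].
    unfold Rabs. destruct Rcase_abs; lra. }
  simpl in Hcrit. replace (dphi s) with (th s) by lra. apply Hle, Hs.
Qed.

Lemma AdmitsPeriodicSub_below H c U th : JointCont H ->
  (forall x, derivable_pt_lim U x (th x)) -> continuity th -> U 0 = U 1 ->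
  (forall s, I01 s -> H s (th s) < c) -> exists a, a < c /\ AdmitsPeriodicSub H a.
Proof.
  intros Hcont DU Cth Hper Hlt.
  set (g := fun s => H s (th s)).
  pose proof (continuity_ext01 g (ContOn01_JointCont_comp H th Hcont Cth)) as Cg.
  destruct (continuity_ab_maj (ext01 g) 0 1 ltac:(lra) (fun x _ => Cg x)) as [s0 [Hmax Hs0]].
  rewrite ext01_id in Hmax by exact Hs0.
  exists (g s0). split; [apply Hlt, Hs0|].
  exists U. split; [|split; auto].
  - apply ContOn01_of_continuity. intro x.
    apply derivable_continuous_pt. exists (th x). apply DU.
  - apply (ViscSub_of_derivative H (g s0) U th DU). intros s Hs.
    pose proof (Hmax s ltac:(lra)) as Hgs. rewrite ext01_id in Hgs by (unfold I01; lra).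
    exact Hgs.
Qed.

Lemma AdmitsPeriodicSub_below_of_band H c hi lo : JointCont H ->
  continuity hi -> continuity lo ->
  (forall s p, I01 s -> lo s < p < hi s -> H s p < c) -> (forall s, I01 s -> lo s < hi s) ->
  RInt lo 0 1 < 0 -> 0 < RInt hi 0 1 -> exists a, a < c /\ AdmitsPeriodicSub H a.
Proof.
  intros Hcont Chi Clo Hband Hopen Hlo Hhi.
  set (lam := - RInt lo 0 1 / (RInt hi 0 1 - RInt lo 0 1)).
  assert (Hlam : 0 < lam < 1).
  { unfold lam. split; [apply Rdiv_lt_0_compat; lra|].
    apply (Rmult_lt_reg_r (RInt hi 0 1 - RInt lo 0 1)); [lra|].
    unfold Rdiv. rewrite Rmult_assoc, Rinv_l; lra. }
  apply (AdmitsPeriodicSub_below H c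
    (fun x => lam * RInt hi 0 x + (1 - lam) * RInt lo 0 x)
    (fun x => lam * hi x + (1 - lam) * lo x) Hcont).
  - intro x.
    apply (derivable_pt_lim_plus (fun t => lam * RInt hi 0 t) (fun t => (1 - lam) * RInt lo 0 t));
      [apply (derivable_pt_lim_scal (fun t => RInt hi 0 t)) |
       apply (derivable_pt_lim_scal (fun t => RInt lo 0 t))];
      apply derivable_pt_lim_RInt; auto.
  - apply (continuity_plus (fun x => lam * hi x) (fun x => (1 - lam) * lo x));
      [apply (continuity_scal hi) | apply (continuity_scal lo)]; auto.
  - assert (Hhi0 : RInt hi 0 0 = 0) by (rewrite RInt_point; reflexivity).
    assert (Hlo0 : RInt lo 0 0 = 0) by (rewrite RInt_point; reflexivity).
    rewrite Hhi0, Hlo0. unfold lam. field. lra.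
  - intros s Hs. apply Hband; auto. pose proof (Hopen s Hs). nra.
Qed.

Theorem proposition5p7
  (H : R -> R -> R)
  (Hcont : JointCont H) (Hcoer : Coercive H) (Hqc : QuasiConvex H)
  (Hint : InteriorCond H)
  (minH : R -> R) (HminH : forall s, I01 s -> IsMinOver (fun _ => True) (H s) (minH s))
  (aH : R) (HaH : IsMaxOver I01 minH aH)
  (cH : R) (HcH : IsMinOver (AdmitsPeriodicSub H) (fun a => a) cH)
  (Hcase : cH > aH \/ (exists k, forall s, I01 s -> minH s = k))
  (sigp sigm : R -> R)
  (Hsigp : forall s, I01 s -> H s (sigp s) = cH /\ (forall p, H s p = cH -> p <= sigp s))
  (Hsigm : forall s, I01 s -> H s (sigm s) = cH /\ (forall p, H s p = cH -> sigm s <= p)) :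
  exists (prm : Riemann_integrable sigm 0 1) (prp : Riemann_integrable sigp 0 1),
    Rmin (- RiemannInt prm) (RiemannInt prp) = 0.
Proof.
  pose proof (upper_endpoint_continuous H cH sigp sigm Hcont Hcoer Hqc Hint Hsigp Hsigm) as Cp.
  pose proof (lower_endpoint_continuous H cH sigp sigm Hcont Hcoer Hqc Hint Hsigp Hsigm) as Cm.
  destruct (RiemannInt_ContOn01 sigp Cp) as [prp Ep].
  destruct (RiemannInt_ContOn01 sigm Cm) as [prm Em].
  exists prm, prp. rewrite Ep, Em.
  destruct HcH as [[c0 [[u [Hu [Hper Hsub]]] Hc0]] Hmin]. simpl in Hc0. subst c0.
  assert (Ip : 0 <= RInt (ext01 sigp) 0 1).
  { apply (RInt_ge0_of_upper_barrier H cH u); auto; [apply continuity_ext01, Cp|].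
    intros s p Hs Hsp. rewrite ext01_id in Hsp by (unfold I01; lra).
    apply (level_lt_right_of_max H cH sigp); auto. unfold I01; lra. }
  assert (Im : RInt (ext01 sigm) 0 1 <= 0).
  { apply (RInt_le0_of_lower_barrier H cH u); auto; [apply continuity_ext01, Cm|].
    intros s p Hs Hsp. rewrite ext01_id in Hsp by (unfold I01; lra).
    apply (level_lt_left_of_min H cH sigm); auto. unfold I01; lra. }
  enough (Hzero : RInt (ext01 sigp) 0 1 = 0 \/ RInt (ext01 sigm) 0 1 = 0).
  { destruct Hzero as [-> | ->]; [apply Rmin_right | rewrite Ropp_0; apply Rmin_left]; lra. }
  destruct (band_open_or_point H cH sigp sigm Hcont Hcoer Hqc Hint Hsigp Hsigm minH aH HminH HaH
    Hcase) as [Hopen | Hpoint].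
  - destruct (Req_dec (RInt (ext01 sigp) 0 1) 0); auto.
    destruct (Req_dec (RInt (ext01 sigm) 0 1) 0); auto. exfalso.
    destruct (AdmitsPeriodicSub_below_of_band H cH (ext01 sigp) (ext01 sigm) Hcont
      (continuity_ext01 sigp Cp) (continuity_ext01 sigm Cm)) as [a [Ha Hadm]]; try lra.
    + intros s p Hs. rewrite !ext01_id by exact Hs.
      apply (level_lt_in_band H cH sigp sigm Hqc Hint Hsigp Hsigm s p Hs).
    + intros s Hs. rewrite !ext01_id by exact Hs. apply Hopen, Hs.
    + pose proof (Hmin a Hadm). simpl in *. lra.
  - left. enough (RInt (ext01 sigp) 0 1 = RInt (ext01 sigm) 0 1) by lra.
    apply RInt_ext. intros x Hx. rewrite Rmin_left, Rmax_right in Hx by lra.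
    rewrite !ext01_id by (unfold I01; lra). symmetry. apply Hpoint. unfold I01; lra.
Qed.
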